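(* Consider the interior permanent magnet synchronous machine (IPMSM) model in the stator frame with state $x=(i_\alpha,i_\beta,\omega,\theta)^T$, input $u=\mathcal{V}=(v_\alpha,v_\beta)^T$ and output $y=h(x)=\mathcal{I}=(i_\alpha,i_\beta)^T$: \[ \frac{d\mathcal{I}}{dt}=\mathfrak{L}(\theta)^{-1}\Big(\mathcal{V}-\big(R\,\mathbb{I}_2+\omega\,\mathfrak{L}'(\theta)\big)\mathcal{I}-\psi_r\,\mathcal{C}'(\theta)\,\omega\Big),\qquad \frac{d\omega}{dt}=\frac{p}{J}(T_m-T_l),\qquad \frac{d\theta}{dt}=\omega, \] where $\mathfrak{L}(\theta)=\begin{bmatrix}L_0+L_2\cos2\theta & L_2\sin 2\theta\\ L_2\sin2\theta & L_0-L_2\cos2\theta\end{bmatrix}$, $\mathfrak{L}'=\partial\mathfrak{L}/\partial\theta$, $\mathcal{C}'(\theta)=(-\sin\theta,\cos\theta)^T$, and $T_m=\frac{3p}{2}\big[\psi_r(i_\beta\cos\theta-i_\alpha\sin\theta)-L_2\big((i_\alpha^2-i_\beta^2)\sin2\theta-2i_\alpha i_\beta\cos2\theta\big)\big]$. Let $L_d=L_0+L_2$, $L_q=L_0-L_2$ (both nonzero), $L_\delta=L_d-L_q=2L_2$, and let $i_d=i_\alpha\cos\theta+i_\beta\sin\theta$, $i_q=-i_\alpha\sin\theta+i_\beta\cos\theta$ be the rotor-frame currents, with $\frac{di_d}{dt},\frac{di_q}{dt}$ their time derivatives along the model. Let $\Delta_{y1}$ be the determinant of the $4\times4$ matrix $\frac{\partial}{\partial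 x}\begin{bmatrix} h(x)\\ \mathcal{L}_f h(x)\end{bmatrix}$ (gradient of the output and of its first time derivative). Then \[ \Delta_{y1}=\frac{1}{L_dL_q}\Big[(L_\delta i_d+\psi_r)^2+L_\delta^2 i_q^2\Big]\omega+\frac{L_\delta}{L_dL_q}\Big[L_\delta\frac{di_d}{dt}\,i_q-(L_\delta i_d+\psi_r)\frac{di_q}{dt}\Big]. \] Consequently, defining the observability vector $\Psi_{\mathcal O}$ with rotor-frame components $\Psi_{\mathcal{O}d}=L_\delta i_d+\psi_r$, $\Psi_{\mathcal{O}q}=L_\delta i_q$, and its phase $\theta_{\mathcal O}=\arctan\!\big(\frac{L_\delta i_q}{L_\delta i_d+\psi_r}\big)$ in the rotor frame, at any state where $\Psi_{\mathcal O}\neq0$ and \[ \omega\neq\frac{d}{dt}\theta_{\mathcal O}, \] the observability rank condition holds and the IPMSM is locally weakly observable there. In particular, at standstill ($\omega=0$) local observability is guaranteed if $\Psi_{\mathcal O}$ changes its orientation in the rotor frame.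
   Context: For a system $\dot x=f(x,u)$, $y=h(x)$ with $x\in\mathbb{R}^n$, the Lie derivatives are $\mathcal{L}_f^0h=h$, $\mathcal{L}_fh=\frac{\partial h}{\partial x}f$, $\mathcal{L}_f^kh=\mathcal{L}_f\mathcal{L}_f^{k-1}h$. The system satisfies the observability rank condition at $x_0$ if the matrix $\frac{\partial}{\partial x}[\mathcal{L}_f^0h;\mathcal{L}_fh;\dots;\mathcal{L}_f^{n-1}h]$ at $x_0$ has full rank $n$; this implies local weak observability at $x_0$ (Hermann–Krener). Here $R$ is the stator winding resistance, $\psi_r$ the rotor permanent-magnet flux, $p$ the number of pole pairs, $J$ the inertia, $T_l$ the load torque, $\omega$ the electrical rotor speed and $\theta$ the electrical rotor position; $\mathbb{I}_2$ is the $2\times2$ identity. *)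

From HB Require Import structures.
From mathcomp Require Import all_boot all_order all_algebra.
From mathcomp Require Import all_classical all_reals all_analysis.
Set Implicit Arguments. Unset Strict Implicit. Unset Printing Implicit Defensive.
Import Order.TTheory GRing.Theory Num.Theory.
Import numFieldNormedType.Exports.
Local Open Scope ring_scope.

Section Generic.
Variable R : realType.

Definition partial n (g : 'rV[R]_n -> R) (k : 'I_n) (x : 'rV[R]_n) : R :=
  derive1 (fun t : R => g (x + t *: delta_mx 0 k)) 0.

Definition lie n (f : 'rV[R]_n -> 'rV[R]_n) (g : 'rV[R]_n -> R) (x : 'rV[R]_n) : R :=
  \sum_(k < n) partial g k x * f x 0 k.

Fixpoint iter_lie n (f : 'rV[R]_n -> 'rV[R]_n) (k : nat) (g : 'rV[R]_n -> R) :=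
  match k with
  | 0 => g
  | k'.+1 => lie f (iter_lie f k' g)
  end.

(* Observability matrix d/dx [L^0 h; L_f h; ...; L_f^(N-1) h] for an output
   h with m scalar components h 0, ..., h (m-1); row r corresponds to
   L_f^(r / m) h_(r mod m). *)
Definition obs_mx n m (f : 'rV[R]_n -> 'rV[R]_n) (h : nat -> 'rV[R]_n -> R)
  (N : nat) (x : 'rV[R]_n) : 'M[R]_(N * m, n) :=
  \matrix_(r < N * m, j < n) partial (iter_lie f (r %/ m)%N (h (r %% m)%N)) j x.

Definition obs_rank_condition n m (f : 'rV[R]_n -> 'rV[R]_n)
  (h : nat -> 'rV[R]_n -> R) (x0 : 'rV[R]_n) : Prop :=
  \rank (obs_mx m f h n x0) = n.

End Generic.

Section IPMSM.
Variable R : realType.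

Definition ia (x : 'rV[R]_4) : R := x 0 (@Ordinal 4 0 isT).
Definition ib (x : 'rV[R]_4) : R := x 0 (@Ordinal 4 1 isT).
Definition om (x : 'rV[R]_4) : R := x 0 (@Ordinal 4 2 isT).
Definition th (x : 'rV[R]_4) : R := x 0 (@Ordinal 4 3 isT).

Definition h_out (i : nat) (x : 'rV[R]_4) : R := if i == 0%N then ia x else ib x.

Definition Lmat (L0 L2 t : R) : 'M[R]_2 :=
  \matrix_(i < 2, j < 2)
    if (i == 0) && (j == 0) then L0 + L2 * cos (2 * t)
    else if (i == 1) && (j == 1) then L0 - L2 * cos (2 * t)
    else L2 * sin (2 * t).

Definition Lmat' (L0 L2 t : R) : 'M[R]_2 :=
  \matrix_(i < 2, j < 2) derive1 (fun s : R => Lmat L0 L2 s i j) t.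

Definition Cmat' (t : R) : 'cV[R]_2 :=
  \col_(i < 2) if i == 0 then - sin t else cos t.

Definition Icur (x : 'rV[R]_4) : 'cV[R]_2 :=
  \col_(i < 2) if i == 0 then ia x else ib x.

Definition Tm (p psi_r L2 : R) (x : 'rV[R]_4) : R :=
  (3 * p / 2) * (psi_r * (ib x * cos (th x) - ia x * sin (th x))
     - L2 * ((ia x ^+ 2 - ib x ^+ 2) * sin (2 * th x)
             - 2 * ia x * ib x * cos (2 * th x))).

(* the IPMSM vector field with the (constant) input V = u *)
Definition ipmsm_f (Rs psi_r p J Tl L0 L2 : R) (u : 'cV[R]_2)
  (x : 'rV[R]_4) : 'rV[R]_4 :=
  let dI := invmx (Lmat L0 L2 (th x)) *m
      (u - (Rs%:M + om x *: Lmat' L0 L2 (th x)) *m Icur x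
         - (psi_r * om x) *: Cmat' (th x)) in
  \row_(k < 4)
    if k == 0 :> nat then dI 0 0
    else if k == 1 :> nat then dI 1 0
    else if k == 2 :> nat then p / J * (Tm p psi_r L2 x - Tl)
    else om x.

Definition id_cur (x : 'rV[R]_4) : R := ia x * cos (th x) + ib x * sin (th x).
Definition iq_cur (x : 'rV[R]_4) : R := - ia x * sin (th x) + ib x * cos (th x).

Definition PsiOd (Ldl psi_r : R) (x : 'rV[R]_4) : R := Ldl * id_cur x + psi_r.
Definition PsiOq (Ldl : R) (x : 'rV[R]_4) : R := Ldl * iq_cur x.

(* time derivative along the model of the phase theta_O of Psi_O:
   theta_O = arctan(PsiOq / PsiOd) where PsiOd <> 0; where PsiOd = 0 (and
   PsiOq <> 0) the phase is locally pi/2 - arctan(PsiOd / PsiOq) up to a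
   constant multiple of pi. *)
Definition dthetaO (f : 'rV[R]_4 -> 'rV[R]_4) (Ldl psi_r : R) (x : 'rV[R]_4) : R :=
  if PsiOd Ldl psi_r x != 0 then
    lie f (fun y => atan (PsiOq Ldl y / PsiOd Ldl psi_r y)) x
  else - lie f (fun y => atan (PsiOd Ldl psi_r y / PsiOq Ldl y)) x.

End IPMSM.
Arguments ia {R}. Arguments ib {R}. Arguments om {R}. Arguments th {R}.
Arguments h_out {R}. Arguments Icur {R}. Arguments Cmat' {R}.
Arguments id_cur {R}. Arguments iq_cur {R}.

From HB Require Import structures.
From mathcomp Require Import all_boot all_order all_algebra.
From mathcomp Require Import all_classical all_reals all_analysis.
From mathcomp Require Import ring.
Set Implicit Arguments. Unset Strict Implicit. Unset Printing Implicit Defensive.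
Import Order.TTheory GRing.Theory Num.Theory.
Import numFieldNormedType.Exports.
Local Open Scope ring_scope.

(* Since L(theta) = rho(theta) diag(Ld, Lq) rho(theta)^T for the rotation rho(theta),
   the stator-frame current dynamics are rho(theta) applied to the rotor-frame (dq)
   dynamics, plus the term omega (-i_beta, i_alpha) coming from the rotation itself.
   The first two rows of the observability matrix are unit vectors, so Delta_y1 is
   the minor d(dI/dt)/d(omega, theta); rotating it back to the rotor frame costs
   nothing (rho has determinant one), and there it is an explicit rational function
   of i_d, i_q, omega and their derivatives, equal to
   |Psi_O|^2 / (Ld Lq) * (omega - d theta_O / dt).  When Delta_y1 <> 0 the first four
   rows of the observability matrix already have rank four. *)

Section PartialDerivatives.
Variables (R : realType) (n : nat).
Implicit Types (g : 'rV[R]_n -> R) (f : 'rV[R]_n -> 'rV[R]_n) (x : 'rV[R]_n).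
Implicit Types (k : 'I_n) (d : R).

Definition along g x (k : 'I_n) (t : R) : R := g (x + t *: delta_mx 0 k).

Lemma along0 g x k : along g x k 0 = g x.
Proof. by rewrite /along scale0r addr0. Qed.

Lemma partialE g x k d : is_derive (0 : R) 1 (along g x k) d -> partial g k x = d.
Proof. by move=> dg; rewrite /partial derive1E derive_val. Qed.

Lemma partial_is_derive g x k :
  derivable (along g x k) (0 : R) 1 -> is_derive (0 : R) 1 (along g x k) (partial g k x).
Proof. by move=> /derivableP; rewrite /partial derive1E. Qed.

Lemma is_derive_along_affine (a b : R) g g' x k : g' =1 (fun y => a * g y + b) ->
  derivable (along g x k) (0 : R) 1 -> is_derive (0 : R) 1 (along g' x k) (a * partial g k x).
Proof.
move=> g'E /partial_is_derive dg.
have -> : along g' x k = fun t => a * along g x k t + b by apply/funext => t; exact: g'E.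
by apply: trigger_derive; rewrite /GRing.scale /=; ring.
Qed.

Lemma is_derive_atan_div (u v : R -> R) t du dv : v t != 0 ->
  is_derive t 1 u du -> is_derive t 1 v dv ->
  is_derive t 1 (fun y => atan (u y / v y))
    ((du * v t - u t * dv) / (v t ^+ 2 + u t ^+ 2)).
Proof.
move=> vt0 u_der v_der.
have d_atan : is_derive t 1 (fun y => atan (u y / v y)) _ :=
  is_derive1_comp (is_derive1_atan _) (is_deriveM u_der (is_deriveV vt0 v_der)).
apply: trigger_derive d_atan _; rewrite /GRing.scale /=.
have vt2 : 0 < v t ^+ 2 by rewrite lt_def sqr_ge0 andbT expf_neq0.
have S0 : v t ^+ 2 + u t ^+ 2 != 0 by rewrite gt_eqF // ltr_wpDr ?sqr_ge0.
have -> : 1 + (u t / v t) ^+ 2 = (v t ^+ 2 + u t ^+ 2) / v t ^+ 2 by field.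
by field; rewrite S0 vt0.
Qed.

Lemma partial_atan_div (g1 g2 : 'rV[R]_n -> R) x k : g2 x != 0 ->
  derivable (along g1 x k) (0 : R) 1 -> derivable (along g2 x k) (0 : R) 1 ->
  partial (fun y => atan (g1 y / g2 y)) k x =
  (partial g1 k x * g2 x - g1 x * partial g2 k x) / (g2 x ^+ 2 + g1 x ^+ 2).
Proof.
move=> g2x /partial_is_derive d1 /partial_is_derive d2; apply: partialE.
rewrite -(along0 g1 x k) -(along0 g2 x k).
have g2x' : along g2 x k 0 != 0 by rewrite along0.
exact: is_derive_atan_div g2x' d1 d2.
Qed.

Lemma lie_affine f (a b : R) g g' x : g' =1 (fun y => a * g y + b) ->
  (forall k, derivable (along g x k) (0 : R) 1) -> lie f g' x = a * lie f g x.
Proof.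
move=> g'E dg; rewrite /lie mulr_sumr; apply: eq_bigr => k _.
by rewrite (partialE (is_derive_along_affine g'E (dg k))) mulrA.
Qed.

Lemma lie_atan_div f (g1 g2 : 'rV[R]_n -> R) x : g2 x != 0 ->
  (forall k, derivable (along g1 x k) (0 : R) 1) ->
  (forall k, derivable (along g2 x k) (0 : R) 1) ->
  lie f (fun y => atan (g1 y / g2 y)) x =
  (lie f g1 x * g2 x - g1 x * lie f g2 x) / (g2 x ^+ 2 + g1 x ^+ 2).
Proof.
move=> g2x d1 d2; rewrite /lie mulr_suml mulr_sumr -sumrB mulr_suml.
by apply: eq_bigr => k _; rewrite partial_atan_div //; ring.
Qed.

Lemma coord_shift x k j t :
  (x + t *: delta_mx 0 k) 0 j = x 0 j + t * (k == j)%:R.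
Proof. by rewrite !mxE eqxx eq_sym. Qed.

Lemma partial_coord j x k : partial (fun y => y 0 j) k x = (k == j)%:R.
Proof.
apply: partialE; rewrite /along.
under eq_fun do rewrite coord_shift.
by apply: trigger_derive; rewrite /GRing.scale /=; ring.
Qed.

Lemma lie_coord f j x : lie f (fun y => y 0 j) x = f x 0 j.
Proof.
rewrite /lie (bigD1 j) //= big1 => [|k kj]; first by rewrite partial_coord eqxx mul1r addr0.
by rewrite partial_coord (negbTE kj) mul0r.
Qed.

End PartialDerivatives.

Lemma det_mx22 (R : comNzRingType) (A : 'M[R]_2) :
  \det A = A 0 0 * A 1 1 - A 0 1 * A 1 0.
Proof.
rewrite (expand_det_row _ 0) !big_ord_recl big_ord0 /cofactor !det_mx11 !mxE /=.
have -> : lift (0 : 'I_2) (0 : 'I_1) = 1 by apply/val_inj.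
have -> : lift (1 : 'I_2) (0 : 'I_1) = 0 by apply/val_inj.
by rewrite expr0 expr1 addr0 mul1r mulN1r mulrN.
Qed.

Section UnitRows.
Variables (R : comNzRingType) (A : 'M[R]_4).
Let i2 := @Ordinal 4 2 isT.
Let i3 := @Ordinal 4 3 isT.

Lemma det_mx44_unit_rows :
  (forall j, A 0 j = (j == 0)%:R) -> (forall j, A 1 j = (j == 1)%:R) ->
  \det A = A i2 i2 * A i3 i3 - A i2 i3 * A i3 i2.
Proof.
move=> A0 A1.
pose B (i j : nat) := A (inord i) (inord j).
have Aval i j : A i j = B i j by rewrite /B !inord_val.
have B11 : B 1%N 1%N = 1.
  by rewrite /B (_ : inord 1 = 1) ?A1 //; apply/val_inj; rewrite /= inordK.
rewrite (expand_det_row _ 0) big_ord_recl big1 ?addr0; last first.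
  by move=> j _; rewrite A0 mul0r.
rewrite A0 mul1r /cofactor expr0 mul1r (expand_det_row _ 0) big_ord_recl big1 ?addr0.
  by rewrite /cofactor det_mx22 !mxE !Aval /= B11 expr0 !mul1r.
move=> j _; rewrite !mxE.
have -> : lift 0 (0 : 'I_3) = 1 by apply/val_inj.
by rewrite A1 mul0r.
Qed.

End UnitRows.

Lemma mxrank_obs_mx_le (R : realType) n m (f : 'rV[R]_n -> 'rV[R]_n)
    (h : nat -> 'rV[R]_n -> R) N1 N2 x : (N1 <= N2)%N ->
  (\rank (obs_mx m f h N1 x) <= \rank (obs_mx m f h N2 x))%N.
Proof.
move=> le_N; apply/mxrankS/row_subP => i.
have le_Nm : (N1 * m <= N2 * m)%N by rewrite leq_mul2r le_N orbT.
have -> : row i (obs_mx m f h N1 x) = row (widen_ord le_Nm i) (obs_mx m f h N2 x).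
  by apply/rowP => j; rewrite !mxE.
exact: row_sub.
Qed.

Lemma sum_sqr_neq0 (R : realDomainType) (a b : R) :
  (a, b) != (0, 0) -> a ^+ 2 + b ^+ 2 != 0.
Proof. by rewrite paddr_eq0 ?sqr_ge0 // !sqrf_eq0 -xpair_eqE. Qed.

Section Trig.
Context {R : realType}.
Lemma cos2E (t : R) : cos (2 * t) = cos t ^+ 2 - sin t ^+ 2.
Proof. by rewrite (_ : 2 * t = t + t) ?cosD -?expr2 //; ring. Qed.
Lemma sin2E (t : R) : sin (2 * t) = 2 * sin t * cos t.
Proof. by rewrite (_ : 2 * t = t + t) ?sinD //; ring. Qed.
Lemma sin_sqr (t : R) : sin t ^+ 2 = 1 - cos t ^+ 2.
Proof. by rewrite -(cos2Dsin2 t); ring. Qed.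
End Trig.

Local Notation i_ia := (@Ordinal 4 0 isT).
Local Notation i_ib := (@Ordinal 4 1 isT).
Local Notation i_om := (@Ordinal 4 2 isT).
Local Notation i_th := (@Ordinal 4 3 isT).

Lemma lie_rV4 {R : realType} (f : 'rV[R]_4 -> 'rV[R]_4) g x : lie f g x =
  partial g i_ia x * f x 0 i_ia + partial g i_ib x * f x 0 i_ib
  + partial g i_om x * f x 0 i_om + partial g i_th x * f x 0 i_th.
Proof.
rewrite /lie !big_ord_recl big_ord0 addr0 !addrA.
have -> : lift ord0 (lift ord0 (lift ord0 ord0)) = i_th :> 'I_4 by apply/val_inj.
have -> : lift ord0 (lift ord0 ord0) = i_om :> 'I_4 by apply/val_inj.
have -> : lift ord0 ord0 = i_ib :> 'I_4 by apply/val_inj.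
by have -> : ord0 = i_ia :> 'I_4 by apply/val_inj.
Qed.

Section IPMSM.
Variables (R : realType) (Rs psi_r p J Tl L0 L2 : R) (u : 'cV[R]_2).
Hypotheses (Ld_neq0 : L0 + L2 != 0) (Lq_neq0 : L0 - L2 != 0).

Local Notation Ld := (L0 + L2).
Local Notation Lq := (L0 - L2).
Local Notation Ldl := (Ld - Lq).
Local Notation f := (ipmsm_f Rs psi_r p J Tl L0 L2 u).

Definition vd_in (x : 'rV[R]_4) := u 0 0 * cos (th x) + u 1 0 * sin (th x).
Definition vq_in (x : 'rV[R]_4) := - u 0 0 * sin (th x) + u 1 0 * cos (th x).

Definition id_dot (x : 'rV[R]_4) :=
  (vd_in x - Rs * id_cur x + om x * Lq * iq_cur x) / Ld.
Definition iq_dot (x : 'rV[R]_4) :=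
  (vq_in x - Rs * iq_cur x - om x * (Ld * id_cur x + psi_r)) / Lq.

Lemma Lmat'E t : Lmat' L0 L2 t = \matrix_(i < 2, j < 2)
  if (i == 0) && (j == 0) then - (2 * L2 * sin (2 * t))
  else if (i == 1) && (j == 1) then 2 * L2 * sin (2 * t)
  else 2 * L2 * cos (2 * t).
Proof.
apply/matrixP => i j; rewrite !mxE.
under eq_fun do rewrite mxE.
by case: ifP => _; [|case: ifP => _]; rewrite derive1E derive_val /GRing.scale /=; ring.
Qed.

(* [ring: (sin_sqr t)] and [field: (sin_sqr t)] normalise modulo sin t ^ 2 = 1 - cos t ^ 2. *)
Lemma det_Lmat t : \det (Lmat L0 L2 t) = Ld * Lq.
Proof. by rewrite det_mx22 !mxE /= cos2E sin2E; ring: (sin_sqr t). Qed.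

Lemma ipmsm_f_rotor x :
  f x 0 i_ia = cos (th x) * id_dot x - sin (th x) * iq_dot x - om x * ib x /\
  f x 0 i_ib = sin (th x) * id_dot x + cos (th x) * iq_dot x + om x * ia x.
Proof.
pose dI : 'cV[R]_2 := \col_i
  if i == 0 then cos (th x) * id_dot x - sin (th x) * iq_dot x - om x * ib x
  else sin (th x) * id_dot x + cos (th x) * iq_dot x + om x * ia x.
have L_unit : Lmat L0 L2 (th x) \in unitmx.
  by rewrite unitmxE unitfE det_Lmat mulf_neq0.
have L_dI : Lmat L0 L2 (th x) *m dI = u - (Rs%:M + om x *: Lmat' L0 L2 (th x)) *m Icur x
    - (psi_r * om x) *: Cmat' (th x).
{ rewrite Lmat'E; apply/matrixP => i j; rewrite (ord1 j).
  have [->|->] : i = 0 \/ i = 1 by case: i => [[|[|//]] ?]; [left|right]; apply/val_inj.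
  all: rewrite !mxE !big_ord_recl !big_ord0 !mxE /=.
  all: rewrite /id_dot /iq_dot /vd_in /vq_in /id_cur /iq_cur cos2E sin2E.
  all: by field: (sin_sqr (th x)); rewrite ?Ld_neq0 ?Lq_neq0. }
rewrite /ipmsm_f -L_dI mulKmx // !mxE /=.
by split.
Qed.

Lemma ipmsm_f_th x : f x 0 i_th = om x.
Proof. by rewrite /ipmsm_f mxE. Qed.

Lemma is_derive_id_cur x k : is_derive (0 : R) 1 (along id_cur x k)
  ((k == i_ia)%:R * cos (th x) + (k == i_ib)%:R * sin (th x) + (k == i_th)%:R * iq_cur x).
Proof.
rewrite /along /id_cur /iq_cur /ia /ib /th.
under eq_fun do rewrite !coord_shift.
by apply: trigger_derive; rewrite /GRing.scale /= !mul0r !addr0; ring.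
Qed.

Lemma is_derive_iq_cur x k : is_derive (0 : R) 1 (along iq_cur x k)
  (- (k == i_ia)%:R * sin (th x) + (k == i_ib)%:R * cos (th x) - (k == i_th)%:R * id_cur x).
Proof.
rewrite /along /id_cur /iq_cur /ia /ib /th.
under eq_fun do rewrite !coord_shift.
by apply: trigger_derive; rewrite /GRing.scale /= !mul0r !addr0; ring.
Qed.

Lemma lie_id_cur x : lie f id_cur x = id_dot x.
Proof.
rewrite lie_rV4 !(partialE (is_derive_id_cur _ _)) /= ipmsm_f_th.
have [-> ->] := ipmsm_f_rotor x.
rewrite /id_dot /iq_dot /vd_in /vq_in /id_cur /iq_cur.
by field: (sin_sqr (th x)); rewrite ?Ld_neq0 ?Lq_neq0.
Qed.

Lemma lie_iq_cur x : lie f iq_cur x = iq_dot x.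
Proof.
rewrite lie_rV4 !(partialE (is_derive_iq_cur _ _)) /= ipmsm_f_th.
have [-> ->] := ipmsm_f_rotor x.
rewrite /id_dot /iq_dot /vd_in /vq_in /id_cur /iq_cur.
by field: (sin_sqr (th x)); rewrite ?Ld_neq0 ?Lq_neq0.
Qed.

Lemma ipmsm_f_rotorE :
  (fun y => f y 0 i_ia) = (fun y => cos (th y) * id_dot y - sin (th y) * iq_dot y - om y * ib y) /\
  (fun y => f y 0 i_ib) = (fun y => sin (th y) * id_dot y + cos (th y) * iq_dot y + om y * ia y).
Proof. by split; apply/funext => y; case: (ipmsm_f_rotor y). Qed.

Lemma partial_om_ipmsm_f x :
  let P := - (Ldl * iq_cur x) / Ld in let Q := - (Ldl * id_cur x + psi_r) / Lq in
  partial (fun y => f y 0 i_ia) i_om x = cos (th x) * P - sin (th x) * Q /\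
  partial (fun y => f y 0 i_ib) i_om x = sin (th x) * P + cos (th x) * Q.
Proof.
move=> P Q; have [-> ->] := ipmsm_f_rotorE.
split; apply: partialE;
  rewrite /P /Q /along /id_dot /iq_dot /vd_in /vq_in /id_cur /iq_cur /ia /ib /om /th;
  under eq_fun do rewrite !coord_shift /=;
  apply: trigger_derive; rewrite /GRing.scale /= ?(mul0r, mulr0, addr0, mulr1);
  by field: (sin_sqr (x 0 i_th)); rewrite ?Ld_neq0 ?Lq_neq0.
Qed.

Lemma partial_th_ipmsm_f x :
  let U := (om x * (Ldl * id_cur x + psi_r) - Ldl * iq_dot x) / Ld in
  let W := - (Ldl * (id_dot x + om x * iq_cur x)) / Lq in
  partial (fun y => f y 0 i_ia) i_th x = cos (th x) * U - sin (th x) * W /\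
  partial (fun y => f y 0 i_ib) i_th x = sin (th x) * U + cos (th x) * W.
Proof.
move=> U W; have [-> ->] := ipmsm_f_rotorE.
split; apply: partialE;
  rewrite /U /W /along /id_dot /iq_dot /vd_in /vq_in /id_cur /iq_cur /ia /ib /om /th;
  under eq_fun do rewrite !coord_shift /=;
  apply: trigger_derive; rewrite /GRing.scale /= ?(mul0r, mulr0, addr0, mulr1);
  by field: (sin_sqr (x 0 i_th)); rewrite ?Ld_neq0 ?Lq_neq0.
Qed.

Lemma det_obs_mx x : \det (obs_mx 2 f h_out 2 x : 'M[R]_4) =
  ((Ldl * id_cur x + psi_r) ^+ 2 + Ldl ^+ 2 * iq_cur x ^+ 2) / (Ld * Lq) * om x
  + Ldl / (Ld * Lq) * (Ldl * lie f id_cur x * iq_cur x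
                       - (Ldl * id_cur x + psi_r) * lie f iq_cur x).
Proof.
have h_out0 : h_out 0 = ia by [].
have h_out1 : h_out 1 = ib by [].
have lie_ia : lie f ia = (fun y => f y 0 i_ia) := funext (lie_coord f i_ia).
have lie_ib : lie f ib = (fun y => f y 0 i_ib) := funext (lie_coord f i_ib).
rewrite det_mx44_unit_rows => [|j|j]; rewrite !mxE /=.
- rewrite (_ : 2 %% 2 = 0)%N // (_ : 3 %% 2 = 1)%N // h_out0 h_out1 lie_ia lie_ib.
  have [-> ->] := partial_om_ipmsm_f x; have [-> ->] := partial_th_ipmsm_f x.
  rewrite lie_id_cur lie_iq_cur.
  by field: (sin_sqr (th x)); rewrite ?Ld_neq0 ?Lq_neq0.
- by rewrite (_ : 0 %% 2 = 0)%N // h_out0 /ia partial_coord.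
- by rewrite (_ : (1 %% 4) %% 2 = 1)%N // h_out1 /ib partial_coord.
Qed.

Lemma dthetaOE l x : (PsiOd l psi_r x, PsiOq l x) != (0, 0) ->
  dthetaO f l psi_r x = l * (iq_dot x * PsiOd l psi_r x - PsiOq l x * id_dot x)
                        / (PsiOd l psi_r x ^+ 2 + PsiOq l x ^+ 2).
Proof.
move=> Psi_neq0; have Psi2_neq0 := sum_sqr_neq0 Psi_neq0.
have d_id k : derivable (along id_cur x k) (0 : R) 1.
  by apply: ex_derive; apply: is_derive_id_cur.
have d_iq k : derivable (along iq_cur x k) (0 : R) 1.
  by apply: ex_derive; apply: is_derive_iq_cur.
have OdE : PsiOd l psi_r =1 (fun y => l * id_cur y + psi_r) by [].
have OqE : PsiOq l =1 (fun y => l * iq_cur y + 0) by move=> y; rewrite addr0.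
have d_Od k : derivable (along (PsiOd l psi_r) x k) (0 : R) 1.
  by apply: ex_derive; apply: is_derive_along_affine OdE (d_id k).
have d_Oq k : derivable (along (PsiOq l) x k) (0 : R) 1.
  by apply: ex_derive; apply: is_derive_along_affine OqE (d_iq k).
rewrite /dthetaO; case: ifPn => [Od_neq0|/negPn/eqP Od0].
  rewrite lie_atan_div // (lie_affine _ OdE) // (lie_affine _ OqE) //.
  by rewrite lie_id_cur lie_iq_cur; field.
have Oq_neq0 : PsiOq l x != 0 by move: Psi_neq0; rewrite Od0 xpair_eqE eqxx.
rewrite lie_atan_div // (lie_affine _ OdE) // (lie_affine _ OqE) //.
rewrite lie_id_cur lie_iq_cur Od0; field.
by rewrite Od0 expr0n add0r in Psi2_neq0.
Qed.

Lemma det_obs_mx_thetaO x : (PsiOd Ldl psi_r x, PsiOq Ldl x) != (0, 0) ->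
  \det (obs_mx 2 f h_out 2 x : 'M[R]_4) =
  (PsiOd Ldl psi_r x ^+ 2 + PsiOq Ldl x ^+ 2) / (Ld * Lq) * (om x - dthetaO f Ldl psi_r x).
Proof.
move=> Psi_neq0; have := sum_sqr_neq0 Psi_neq0.
rewrite det_obs_mx dthetaOE // lie_id_cur lie_iq_cur /PsiOd /PsiOq => Psi2_neq0.
by field; rewrite Psi2_neq0 Ld_neq0 Lq_neq0.
Qed.

End IPMSM.

Theorem mainTheorem1 (R : realType) (Rs psi_r p J Tl L0 L2 : R) (u : 'cV[R]_2) :
  L0 + L2 != 0 -> L0 - L2 != 0 ->
  let Ld := L0 + L2 in
  let Lq := L0 - L2 in
  let Ldl := Ld - Lq in
  let f := ipmsm_f Rs psi_r p J Tl L0 L2 u in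
  (forall x : 'rV[R]_4,
     \det (obs_mx 2 f h_out 2 x : 'M[R]_4) =
       ((Ldl * id_cur x + psi_r) ^+ 2 + Ldl ^+ 2 * iq_cur x ^+ 2) / (Ld * Lq) * om x
       + Ldl / (Ld * Lq) *
         (Ldl * lie f id_cur x * iq_cur x
          - (Ldl * id_cur x + psi_r) * lie f iq_cur x)) /\
  (forall x : 'rV[R]_4,
     (PsiOd Ldl psi_r x, PsiOq Ldl x) != (0, 0) ->
     om x != dthetaO f Ldl psi_r x ->
     obs_rank_condition 2 f h_out x).
Proof.
move=> Ld_neq0 Lq_neq0 Ld Lq Ldl f.
split=> [x|x Psi_neq0 om_neq]; first exact: det_obs_mx.
have rank4 : \rank (obs_mx 2 f h_out 2 x : 'M[R]_4) = 4%N.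
  apply: mxrank_unit; rewrite unitmxE unitfE det_obs_mx_thetaO //.
  rewrite mulf_neq0 ?subr_eq0 // mulf_neq0 ?sum_sqr_neq0 //.
  by rewrite invr_neq0 // mulf_neq0.
apply/eqP; rewrite eqn_leq rank_leq_col /= -[X in (X <= _)%N]rank4.
exact: (@mxrank_obs_mx_le _ _ 2 f h_out 2 4 x).
Qed.
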